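(* Let $R,S,T$ be $\mathfrak h$-modules and let $f:R\otimes S\to T$ be an (even) $\mathfrak h$-intertwiner, where $R\otimes S$ carries the tensor product action. There is a unique even linear map $Q_f:R\otimes\mathrm{Ind}(S)\to\mathrm{Ind}(T)$ such that (1) $Q_f(r\otimes s)=f(r\otimes s)$ for all $r\in R$, $s\in S$, and (2) for all $a\in\mathfrak h$, $m\in\mathbb Z$, $a_m\circ Q_f=Q_f\circ(\delta_{m,0}\,a\otimes\mathrm{id}+\mathrm{id}\otimes a_m)$.
   Context: Super vector spaces over $\mathbb C$, Koszul sign rule (e.g. $(\mathrm{id}\otimes a_m)(r\otimes v)=(-1)^{|a||r|}r\otimes a_mv$). $\mathfrak h$ is a nonzero finite-dimensional abelian Lie superalgebra with even non-degenerate supersymmetric form $(-,-)$; modes $a_m$ ($a\in\mathfrak h$, $m\in\mathbb Z$) satisfy $[a_m,b_n]=m(a,b)\delta_{m+n,0}K$ with $K$ central. For an $\mathfrak h$-module $S$, $\mathrm{Ind}(S)=U(\hat{\mathfrak h})\otimes_{U(\hat{\mathfrak h}_{\ge0}\oplus\mathbb CK)}S$, where $a_m$ ($m>0$) acts by $0$ on $S$, $a_0$ by $a$, and $K$ by $1$; $S\subset\mathrm{Ind}(S)$. *)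

From HB Require Import structures.
From mathcomp Require Import all_boot all_algebra.
From mathcomp Require Import complex.
From mathcomp Require Import Rstruct.

Set Implicit Arguments.
Unset Strict Implicit.
Unset Printing Implicit Defensive.
Import GRing.Theory.
Local Open Scope ring_scope.

Notation C := (complex Rdefinitions.R).

(* Koszul sign (-1)^{p q} for parities p q : bool (false = even, true = odd). *)
Definition ksign (p q : bool) : C := if p && q then -1 else 1.

(* Super vector spaces: a C-vector space V together with a Z/2-grading
   V = V_0 (+) V_1.  [spar p v] means "v is homogeneous of parity p"
   (0 is homogeneous of both parities). *)
Record superStr (V : lmodType C) := SuperStr {
  spar : bool -> V -> Prop;
  spar_sub : forall p (c : C) (u v : V), spar p u -> spar p v -> spar p (c *: u + v);
  spar0 : forall p, spar p 0;
  spar_disj : forall v, spar false v -> spar true v -> v = 0;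
  spar_span : forall v, exists v0 v1, [/\ spar false v0, spar true v1 & v = v0 + v1]
}.

Definition even_linear (V W : lmodType C) (sV : superStr V) (sW : superStr W)
  (g : V -> W) : Prop :=
  (forall (c : C) u v, g (c *: u + v) = c *: g u + g v) /\
  (forall p v, spar sV p v -> spar sW p (g v)).

(* Even bilinear maps V x W -> U; these are exactly (the data of) even linear
   maps V (x) W -> U on the super tensor product, via v (x) w |-> g v w. *)
Definition even_bilinear (V W U : lmodType C)
  (sV : superStr V) (sW : superStr W) (sU : superStr U) (g : V -> W -> U) : Prop :=
  [/\ forall (c : C) v v' w, g (c *: v + v') w = c *: g v w + g v' w,
      forall (c : C) v w w', g v (c *: w + w') = c *: g v w + g v w'
    & forall p q v w, spar sV p v -> spar sW q w -> spar sU (addb p q) (g v w)].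

(* The abelian Lie superalgebra h: a nonzero finite-dimensional super vector
   space (with zero bracket) with an even non-degenerate supersymmetric
   bilinear form. *)
Record heisData := HeisData {
  hsp : vectType C;
  hstr : superStr hsp;
  hform : hsp -> hsp -> C;
  hform_linl : forall (c : C) a a' b, hform (c *: a + a') b = c * hform a b + hform a' b;
  hform_linr : forall (c : C) a b b', hform a (c *: b + b') = c * hform a b + hform a b';
  hform_even : forall p q a b, spar hstr p a -> spar hstr q b -> p != q -> hform a b = 0;
  hform_supersym : forall p q a b, spar hstr p a -> spar hstr q b ->
                     hform a b = ksign p q * hform b a;
  hform_nondeg : forall a, (forall b, hform a b = 0) -> a = 0;
  hsp_nonzero : exists a : hsp, a != 0
}.

(* h-modules (h abelian, so the action operators supercommute). *)
Record hmod (H : heisData) := HMod {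
  hm_sp : lmodType C;
  hm_str : superStr hm_sp;
  hm_act : hsp H -> hm_sp -> hm_sp;
  hm_act_linl : forall (c : C) a a' v, hm_act (c *: a + a') v = c *: hm_act a v + hm_act a' v;
  hm_act_linr : forall (c : C) a v v', hm_act a (c *: v + v') = c *: hm_act a v + hm_act a v';
  hm_act_par : forall p q a v, spar (hstr H) p a -> spar hm_str q v ->
                 spar hm_str (addb p q) (hm_act a v);
  hm_act_comm : forall p q a b v, spar (hstr H) p a -> spar (hstr H) q b ->
                 hm_act a (hm_act b v) = ksign p q *: hm_act b (hm_act a v)
}.

(* Modules over the Heisenberg Lie superalgebra hat h = h (x) C[t,t^-1] (+) C K
   on which K acts by 1.  [hat_mode a m] is the action of a_m. *)
Record hatmod (H : heisData) := HatMod {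
  hat_sp : lmodType C;
  hat_str : superStr hat_sp;
  hat_mode : hsp H -> int -> hat_sp -> hat_sp;
  hat_linl : forall (c : C) a a' m v,
      hat_mode (c *: a + a') m v = c *: hat_mode a m v + hat_mode a' m v;
  hat_linr : forall (c : C) a m v v',
      hat_mode a m (c *: v + v') = c *: hat_mode a m v + hat_mode a m v';
  hat_par : forall p q a m v, spar (hstr H) p a -> spar hat_str q v ->
      spar hat_str (addb p q) (hat_mode a m v);
  hat_comm : forall p q a b (m n : int) v, spar (hstr H) p a -> spar (hstr H) q b ->
      hat_mode a m (hat_mode b n v) - ksign p q *: hat_mode b n (hat_mode a m v)
      = ((m%:~R * hform a b) * (if m + n == 0 then 1 else 0)) *: v
}.

(* Even homomorphisms of (hat h_{>=0} (+) C K)-modules from S (with a_m, m>0,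
   acting by 0, a_0 by a, K by 1) to the restriction of a hat h-module N. *)
Definition is_bhom (H : heisData) (S : hmod H) (N : hatmod H)
  (phi : hm_sp S -> hat_sp N) : Prop :=
  [/\ even_linear (hm_str S) (hat_str N) phi,
      forall a s, phi (hm_act a s) = hat_mode a 0 (phi s)
    & forall a (m : int) s, (0 < m)%R -> hat_mode a m (phi s) = 0].

Definition is_hathom (H : heisData) (M N : hatmod H)
  (psi : hat_sp M -> hat_sp N) : Prop :=
  even_linear (hat_str M) (hat_str N) psi /\
  (forall a m v, psi (hat_mode a m v) = hat_mode a m (psi v)).

(* Ind(S) = U(hat h) (x)_{U(hat h_{>=0} (+) C K)} S, given (as usual, up to
   unique isomorphism) by its defining universal property (Frobenius
   reciprocity): a hat h-module Ind(S) with the inclusion S -> Ind(S), such that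
   every even module map S -> N (N of level 1) extends uniquely to an even
   hat h-module map Ind(S) -> N. *)
Record induced (H : heisData) (S : hmod H) := Induced {
  ind_mod : hatmod H;
  ind_incl : hm_sp S -> hat_sp ind_mod;
  ind_incl_bhom : is_bhom ind_incl;
  ind_univ : forall (N : hatmod H) (phi : hm_sp S -> hat_sp N), is_bhom phi ->
     exists psi, [/\ is_hathom psi, forall s, psi (ind_incl s) = phi s
       & forall psi', is_hathom psi' -> (forall s, psi' (ind_incl s) = phi s) ->
                      forall v, psi' v = psi v]
}.

(* Even h-intertwiners f : R (x) S -> T (tensor product action
   a (r (x) s) = a r (x) s + (-1)^{|a||r|} r (x) a s), as even bilinear maps. *)
Definition intertwiner (H : heisData) (R S T : hmod H)
  (f : hm_sp R -> hm_sp S -> hm_sp T) : Prop :=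
  even_bilinear (hm_str R) (hm_str S) (hm_str T) f /\
  (forall p q a r s, spar (hstr H) p a -> spar (hm_str R) q r ->
     f (hm_act a r) s + ksign p q *: f r (hm_act a s) = hm_act a (f r s)).

(* Currying identifies Q_f with a map Ind(S) -> Hom(R, Ind(T)).  The space
   Hom(R, N) of linear maps into a level-one hat h-module N is itself a
   level-one hat h-module under
     (a_m phi)(r) = (-1)^{|a||r|} (a_m (phi r) - delta_{m,0} phi (a r)),
   and condition (2) says precisely that the curried map is a hat h-module map.
   Condition (1) says it extends s |-> (r |-> f (r (x) s)), which is a map of
   hat h_{>=0}-modules because f intertwines the h-actions.  The universal
   property of Ind(S) then gives existence and uniqueness. *)

From HB Require Import structures.
From mathcomp Require Import all_boot all_algebra.
From mathcomp Require Import complex.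
From mathcomp Require Import Rstruct.
From mathcomp Require Import boolp.
From mathcomp Require Import ring.
Import GRing.Theory Num.Theory.
Local Open Scope ring_scope.
Set Implicit Arguments.
Unset Strict Implicit.

Section LinearFacts.
Variables (U W : lmodType C) (g : U -> W).
Hypothesis g_lin : linear g.

Lemma linB : {morph g : u v / u - v}.
Proof. exact: zmod_morphism_linear. Qed.
Lemma lin0 : g 0 = 0.
Proof. by rewrite -(subrr 0) linB subrr. Qed.
Lemma linD : {morph g : u v / u + v}.
Proof. exact: (GRing.semilinear_linear g_lin).2. Qed.
Lemma linZ c : {morph g : u / c *: u}.
Proof. exact: scalable_linear. Qed.
End LinearFacts.

Lemma linear_subZ (U W : lmodType C) (f g : U -> W) d :
  linear f -> linear g -> linear (fun x => f x - d *: g x).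
Proof.
move=> f_lin g_lin c u v; rewrite f_lin g_lin scalerDr !scalerA mulrC -scalerA.
by rewrite opprD addrACA -scalerBr.
Qed.

Section ParityParts.
Variables (W : lmodType C) (s : superStr W).

Lemma sparZ p c u : spar s p u -> spar s p (c *: u).
Proof. by move=> hu; rewrite -[_ *: _]addr0; apply: spar_sub => //; apply: spar0. Qed.
Lemma sparB p u v : spar s p u -> spar s p v -> spar s p (u - v).
Proof. by move=> hu hv; rewrite -scaleN1r addrC; apply: spar_sub. Qed.

Lemma parity_split_ex v :
  exists x : W * W, [/\ spar s false x.1, spar s true x.2 & v = x.1 + x.2].
Proof. by have [v0 [v1 [h0 h1 e]]] := spar_span s v; exists (v0, v1). Qed.

Definition ppart (p : bool) v :=
  let x := sval (cid (parity_split_ex v)) in if p then x.2 else x.1.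

Lemma ppartP p v : spar s p (ppart p v).
Proof. by rewrite /ppart; case: (svalP (cid (parity_split_ex v))); case: p. Qed.

Lemma ppart_sum v : ppart false v + ppart true v = v.
Proof. by rewrite /ppart; case: (svalP (cid (parity_split_ex v))). Qed.

Lemma ppart_unique v0 v1 p : spar s false v0 -> spar s true v1 ->
  ppart p (v0 + v1) = if p then v1 else v0.
Proof.
move=> h0 h1.
have e : ppart false (v0 + v1) - v0 = v1 - ppart true (v0 + v1).
  by apply/eqP; rewrite subr_eq addrAC [v1 + v0]addrC -{2}(ppart_sum (v0 + v1)) addrK.
have d0 : ppart false (v0 + v1) - v0 = 0.
  apply: spar_disj; first exact/sparB/h0/ppartP.
  by rewrite e; apply/sparB/ppartP.
by case: p; apply/eqP; rewrite -subr_eq0 ?d0 // -oppr_eq0 opprB -e d0.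
Qed.

Lemma ppart_homog p q v : spar s q v -> ppart p v = if p == q then v else 0.
Proof.
have s0 := spar0 s.
case: q => hv; [rewrite -[v]add0r | rewrite -[v]addr0]; rewrite ppart_unique //;
  by case: p; rewrite ?add0r ?addr0.
Qed.

Lemma ppart_linear p : linear (ppart p).
Proof.
move=> c u v; rewrite -[in LHS](ppart_sum u) -[in LHS](ppart_sum v).
rewrite scalerDr addrACA ppart_unique; first by case: p.
  by apply: spar_sub; apply: ppartP.
by apply: spar_sub; apply: ppartP.
Qed.

Lemma eq_linear_homog (U : lmodType C) (g h : W -> U) : linear g -> linear h ->
  (forall p v, spar s p v -> g v = h v) -> g =1 h.
Proof.
move=> g_lin h_lin gh v; rewrite -(ppart_sum v) (linD g_lin) (linD h_lin).
by rewrite !(gh _ _ (ppartP _ _)).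
Qed.
End ParityParts.
Arguments ppart : simpl never.

Section LinearMaps.
Variables (U W : lmodType C).

Record linmap := LinMap { linfun :> U -> W; linfunP : linear linfun }.

Lemma linmapP (f g : linmap) : f =1 g -> f = g.
Proof.
case: f g => [f f_lin] [g g_lin] /funext /= efg; subst g.
by rewrite (Prop_irrelevance f_lin g_lin).
Qed.

HB.instance Definition _ := gen_eqMixin linmap.
HB.instance Definition _ := gen_choiceMixin linmap.

Lemma linear0_fun : linear (fun _ : U => 0 : W).
Proof. by move=> c u v; rewrite scaler0 addr0. Qed.
Lemma linearD_fun (f g : linmap) : linear (fun u => f u + g u).
Proof. by move=> c u v; rewrite !linfunP scalerDr addrACA. Qed.
Lemma linearN_fun (f : linmap) : linear (fun u => - f u).
Proof. by move=> c u v; rewrite linfunP opprD scalerN. Qed.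
Lemma linearZ_fun k (f : linmap) : linear (fun u => k *: f u).
Proof. by move=> c u v; rewrite linfunP scalerDr !scalerA mulrC. Qed.

Let add f g := LinMap (linearD_fun f g).
Let opp f := LinMap (linearN_fun f).
Let scale k f := LinMap (linearZ_fun k f).

Lemma linmap_addA : associative add.
Proof. by move=> f g h; apply: linmapP => u /=; rewrite addrA. Qed.
Lemma linmap_addC : commutative add.
Proof. by move=> f g; apply: linmapP => u /=; rewrite addrC. Qed.
Lemma linmap_add0 : left_id (LinMap linear0_fun) add.
Proof. by move=> f; apply: linmapP => u /=; rewrite add0r. Qed.
Lemma linmap_addN : left_inverse (LinMap linear0_fun) opp add.
Proof. by move=> f; apply: linmapP => u /=; rewrite addNr. Qed.
HB.instance Definition _ :=
  GRing.isZmodule.Build linmap linmap_addA linmap_addC linmap_add0 linmap_addN.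

Lemma linmap_scaleA a b f : scale a (scale b f) = scale (a * b) f.
Proof. by apply: linmapP => u /=; rewrite scalerA. Qed.
Lemma linmap_scale1 : left_id 1 scale.
Proof. by move=> f; apply: linmapP => u /=; rewrite scale1r. Qed.
Lemma linmap_scaleDr : right_distributive scale +%R.
Proof. by move=> a f g; apply: linmapP => u /=; rewrite scalerDr. Qed.
Lemma linmap_scaleDl f : {morph scale^~ f : a b / a + b}.
Proof. by move=> a b; apply: linmapP => u /=; rewrite scalerDl. Qed.
HB.instance Definition _ := GRing.Zmodule_isLmodule.Build C linmap
  linmap_scaleA linmap_scale1 linmap_scaleDr linmap_scaleDl.

Lemma linmapB (f g : linmap) u : (f - g) u = f u - g u. Proof. by []. Qed.
Lemma linmapZ k (f : linmap) u : (k *: f) u = k *: f u. Proof. by []. Qed.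
End LinearMaps.

Lemma ksignK p q : ksign p q * ksign p q = 1.
Proof. by rewrite /ksign; case: (p && q); rewrite ?mulrNN mulr1. Qed.

Lemma ksign_scaleK (V : lmodType C) p q (v : V) : ksign p q *: (ksign p q *: v) = v.
Proof. by rewrite scalerA ksignK scale1r. Qed.

Lemma hm_act_linear H (R : hmod H) a : linear (hm_act (h:=R) a).
Proof. by move=> c u v; apply: hm_act_linr. Qed.
Lemma hm_act_linear_l H (R : hmod H) r : linear (fun a => hm_act (h:=R) a r).
Proof. by move=> c u v; apply: hm_act_linl. Qed.
Lemma hat_mode_linear H (M : hatmod H) a m : linear (hat_mode (h:=M) a m).
Proof. by move=> c u v; apply: hat_linr. Qed.
Lemma hat_mode_linear_l H (M : hatmod H) m v : linear (fun a => hat_mode (h:=M) a m v).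
Proof. by move=> c u v'; apply: hat_linl. Qed.

(* The computation behind [hom_mode_comm]: the five vectors stand for
   b_n a_m phi r, a_m phi (b r), b_n phi (a r), phi (b (a r)) and phi r. *)
Section TwistedCommutator.
Variables (V : lmodType C) (Y X1 X2 Z w : V).

Let comb k1 k2 k3 k4 k5 := k1 *: Y + k2 *: X1 + k3 *: X2 + k4 *: Z + k5 *: w.

Let combD k1 k2 k3 k4 k5 l1 l2 l3 l4 l5 :
  comb k1 k2 k3 k4 k5 + comb l1 l2 l3 l4 l5
  = comb (k1 + l1) (k2 + l2) (k3 + l3) (k4 + l4) (k5 + l5).
Proof. by rewrite /comb !scalerDl; do 4! (rewrite addrACA; congr (_ + _)). Qed.

Let combZ c k1 k2 k3 k4 k5 :
  c *: comb k1 k2 k3 k4 k5 = comb (c * k1) (c * k2) (c * k3) (c * k4) (c * k5).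
Proof. by rewrite /comb !scalerDr !scalerA. Qed.

Let combB k1 k2 k3 k4 k5 l1 l2 l3 l4 l5 :
  comb k1 k2 k3 k4 k5 - comb l1 l2 l3 l4 l5
  = comb (k1 - l1) (k2 - l2) (k3 - l3) (k4 - l4) (k5 - l5).
Proof. by rewrite -scaleN1r combZ combD !mulN1r. Qed.

Let comb_basis : [/\ Y = comb 1 0 0 0 0, X1 = comb 0 1 0 0 0,
  X2 = comb 0 0 1 0 0, Z = comb 0 0 0 1 0 & w = comb 0 0 0 0 1].
Proof. by split; rewrite /comb !scale0r ?addr0 ?add0r scale1r. Qed.

Lemma twisted_commutator_identity (p q s : bool) (dm dn c : C) :
  (p != q -> c = 0) ->
  ksign p s *: (ksign q s *: (ksign p q *: Y + c *: w - dn *: X1)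
                - dm *: (ksign q (p (+) s) *: (X2 - dn *: Z)))
  - ksign p q *: (ksign q s *: (ksign p s *: (Y - dm *: X2)
                - dn *: (ksign p (q (+) s) *: (X1 - dm *: (ksign p q *: Z)))))
  = c *: w.
Proof.
move=> hc; have [eY eX1 eX2 eZ ew] := comb_basis.
rewrite eY eX1 eX2 eZ ew !(combZ, combD, combB).
have [<-|/hc ->] := eqVneq p q; clear hc; rewrite /ksign.
  by case: p; case: s => /=; congr comb; ring.
by case: p; case: q; case: s => /=; congr comb; ring.
Qed.
End TwistedCommutator.

Definition delta0 (m : int) : C := if m == 0 then 1 else 0.

Section HomModule.
Variables (H : heisData) (R : hmod H) (M : hatmod H).
Local Notation sH := (hstr H).
Local Notation sR := (hm_str R).
Local Notation sM := (hat_str M).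
Local Notation Hom := (linmap (hm_sp R) (hat_sp M)).

Lemma eq_hom_homog (phi psi : Hom) :
  (forall q r, spar sR q r -> phi r = psi r) -> phi = psi.
Proof.
by move=> e; apply: linmapP; apply: (eq_linear_homog (linfunP phi) (linfunP psi)) e.
Qed.

(* [twist p] acts on R by (-1)^{p |r|}; it produces the sign of the action
   on Hom(R, M) while keeping the action linear in r. *)
Definition twist p (r : hm_sp R) :=
  ksign p false *: ppart sR false r + ksign p true *: ppart sR true r.

Lemma twist_linear p : linear (twist p).
Proof.
move=> c u v; rewrite /twist !(ppart_linear sR _ c) !scalerDr !scalerA.
by rewrite [ksign p false * c]mulrC [ksign p true * c]mulrC -!scalerA addrACA -scalerDr.
Qed.

Lemma twist_homog p q r : spar sR q r -> twist p r = ksign p q *: r.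
Proof.
by move=> hr; rewrite /twist !(ppart_homog _ hr); case: q hr => _; rewrite scaler0 ?addr0 ?add0r.
Qed.

Definition hom_mode_part p a m (phi : Hom) r :=
  hat_mode a m (phi (twist p r)) - delta0 m *: phi (hm_act a (twist p r)).

Lemma hom_mode_part_linear p a m phi : linear (hom_mode_part p a m phi).
Proof.
apply: linear_subZ => c u v.
  by rewrite twist_linear linfunP hat_mode_linear.
by rewrite twist_linear hm_act_linear linfunP.
Qed.

Lemma hom_mode_part_linear_l p m phi r : linear (fun a => hom_mode_part p a m phi r).
Proof.
apply: linear_subZ => c a a'; first exact: hat_mode_linear_l.
by rewrite hm_act_linear_l linfunP.
Qed.

Definition hom_mode a m phi : Hom :=
  LinMap (hom_mode_part_linear false (ppart sH false a) m phi)
  + LinMap (hom_mode_part_linear true (ppart sH true a) m phi).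

Lemma hom_modeE p q a m phi r : spar sH p a -> spar sR q r ->
  hom_mode a m phi r = ksign p q *: (hat_mode a m (phi r) - delta0 m *: phi (hm_act a r)).
Proof.
move=> ha hr.
have part0 p' : hom_mode_part p' 0 m phi r = 0.
  rewrite /hom_mode_part (lin0 (hat_mode_linear_l _ _)) (lin0 (hm_act_linear_l _)).
  by rewrite (lin0 (linfunP phi)) scaler0 subr0.
have partE : hom_mode_part p a m phi r =
    ksign p q *: (hat_mode a m (phi r) - delta0 m *: phi (hm_act a r)).
  rewrite /hom_mode_part (twist_homog _ hr) (linZ (hm_act_linear _)) !(linZ (linfunP phi)).
  by rewrite (linZ (hat_mode_linear _ _)) scalerBr scalerA mulrC -scalerA.
rewrite /hom_mode /= !(ppart_homog _ ha).
by case: p ha partE => _ /= <-; rewrite part0 ?addr0 ?add0r.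
Qed.

Definition hom_spar p (phi : Hom) := forall q r, spar sR q r -> spar sM (p (+) q) (phi r).

Lemma hom_spar_sub p c (phi psi : Hom) :
  hom_spar p phi -> hom_spar p psi -> hom_spar p (c *: phi + psi).
Proof. by move=> hphi hpsi q r hr; apply: spar_sub; [apply: hphi | apply: hpsi]. Qed.

Lemma hom_spar0 p : hom_spar p 0.
Proof. by move=> q r _; apply: spar0. Qed.

Lemma hom_spar_disj (phi : Hom) : hom_spar false phi -> hom_spar true phi -> phi = 0.
Proof.
move=> h0 h1; apply: eq_hom_homog => -[] r hr.
  exact: spar_disj (h1 _ _ hr) (h0 _ _ hr).
exact: spar_disj (h0 _ _ hr) (h1 _ _ hr).
Qed.

Definition hom_ppart_fun p (phi : Hom) r :=
  ppart sM p (phi (ppart sR false r)) + ppart sM (~~ p) (phi (ppart sR true r)).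

Lemma hom_ppart_linear p phi : linear (hom_ppart_fun p phi).
Proof.
move=> c u v; rewrite /hom_ppart_fun !(ppart_linear sR _ c) !(linfunP phi).
by rewrite !(ppart_linear sM _ c) scalerDr addrACA.
Qed.

Lemma hom_spar_ppart p phi : hom_spar p (LinMap (hom_ppart_linear p phi)).
Proof.
move=> q r hr /=; rewrite /hom_ppart_fun !(ppart_homog _ hr).
case: q hr => _ /=; rewrite (lin0 (linfunP phi)) (lin0 (ppart_linear _ _)).
  by rewrite add0r addbT; apply: ppartP.
by rewrite addr0 addbF; apply: ppartP.
Qed.

Lemma hom_spar_span (phi : Hom) :
  exists phi0 phi1, [/\ hom_spar false phi0, hom_spar true phi1 & phi = phi0 + phi1].
Proof.
exists (LinMap (hom_ppart_linear false phi)), (LinMap (hom_ppart_linear true phi)).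
split; try exact: hom_spar_ppart.
apply: linmapP => r /=; rewrite /hom_ppart_fun addrACA [ppart sM true _ + _]addrC !ppart_sum.
by rewrite -(linD (linfunP phi)) ppart_sum.
Qed.

Definition hom_superStr : superStr Hom :=
  SuperStr hom_spar_sub hom_spar0 hom_spar_disj hom_spar_span.

Lemma hom_mode_linl c a a' m phi :
  hom_mode (c *: a + a') m phi = c *: hom_mode a m phi + hom_mode a' m phi.
Proof.
apply: linmapP => r /=; rewrite !(ppart_linear sH _ c) !hom_mode_part_linear_l.
by rewrite [in RHS]scalerDr addrACA.
Qed.

Lemma hom_mode_linr c a m (phi psi : Hom) :
  hom_mode a m (c *: phi + psi) = c *: hom_mode a m phi + hom_mode a m psi.
Proof.
have partE p a' r : hom_mode_part p a' m (c *: phi + psi) r =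
    c *: hom_mode_part p a' m phi r + hom_mode_part p a' m psi r.
  rewrite /hom_mode_part /= hat_mode_linear scalerDr !scalerA mulrC -scalerA.
  by rewrite opprD addrACA -scalerBr.
by apply: linmapP => r /=; rewrite !partE [in RHS]scalerDr addrACA.
Qed.

Lemma hom_mode_par p q a m phi :
  spar sH p a -> hom_spar q phi -> hom_spar (p (+) q) (hom_mode a m phi).
Proof.
move=> ha hphi s r hr; rewrite (hom_modeE _ _ ha hr).
apply/sparZ/sparB; last apply: sparZ.
  by rewrite -addbA; apply: hat_par => //; apply: hphi.
by rewrite [p (+) q]addbC -addbA; apply: hphi; apply: hm_act_par.
Qed.

Lemma hom_mode_comm p q a b (m n : int) phi : spar sH p a -> spar sH q b ->
  hom_mode a m (hom_mode b n phi) - ksign p q *: hom_mode b n (hom_mode a m phi)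
  = ((m%:~R * hform a b) * (if m + n == 0 then 1 else 0)) *: phi.
Proof.
move=> ha hb; apply: eq_hom_homog => s r hr; rewrite linmapB !linmapZ.
have hbr := hm_act_par hb hr; have har := hm_act_par ha hr.
rewrite (hom_modeE _ _ ha hr) (hom_modeE _ _ hb hr) (hom_modeE _ _ hb har).
rewrite (hom_modeE _ _ hb hr) (hom_modeE _ _ ha hr) (hom_modeE _ _ ha hbr).
rewrite !(linZ (hat_mode_linear _ _)) !(linB (hat_mode_linear _ _)).
rewrite !(linZ (hat_mode_linear _ _)).
rewrite (hm_act_comm _ ha hb) (linZ (linfunP phi)).
set c := (m%:~R * hform a b) * _.
have ab_comm : hat_mode a m (hat_mode b n (phi r)) =
    ksign p q *: hat_mode b n (hat_mode a m (phi r)) + c *: phi r.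
  by rewrite -(hat_comm _ _ _ ha hb) addrC subrK.
rewrite ab_comm; apply: twisted_commutator_identity => pq.
by rewrite /c (hform_even ha hb pq) mulr0 mul0r.
Qed.

Definition hom_hatmod : hatmod H :=
  @HatMod H Hom hom_superStr hom_mode
    hom_mode_linl hom_mode_linr hom_mode_par hom_mode_comm.

Lemma hom_hatmod_mode a m phi : hat_mode (h:=hom_hatmod) a m phi = hom_mode a m phi.
Proof. by []. Qed.
End HomModule.

Lemma delta0_scale (V : lmodType C) m (v : V) :
  delta0 m *: v = if m == 0 then v else 0.
Proof. by rewrite /delta0; case: (m == 0); rewrite ?scale1r ?scale0r. Qed.

Section Currying.
Variables (H : heisData) (R : hmod H) (M N : hatmod H).
Local Notation sH := (hstr H).
Local Notation sR := (hm_str R).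
Local Notation HomRN := (hom_hatmod R N).

Definition mode_equivariant (Q : hm_sp R -> hat_sp M -> hat_sp N) :=
  forall p q a (m : int) r v, spar sH p a -> spar sR q r ->
    hat_mode a m (Q r v)
    = (if m == 0 then Q (hm_act a r) v else 0) + ksign p q *: Q r (hat_mode a m v).

Definition uncurry_hom (psi : hat_sp M -> hat_sp HomRN) r v := linfun (psi v) r.

Section Uncurry.
Variables (psi : hat_sp M -> hat_sp HomRN).
Hypothesis psi_hom : is_hathom psi.

Lemma uncurry_hom_bilinear : even_bilinear sR (hat_str M) (hat_str N) (uncurry_hom psi).
Proof.
have [[psi_lin psi_par] _] := psi_hom.
split=> [c r r' v | c r v v' | p q r v hr hv]; rewrite /uncurry_hom.
- exact: linfunP.
- by rewrite psi_lin.
- by rewrite addbC; apply: psi_par.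
Qed.

Lemma uncurry_hom_equivariant : mode_equivariant (uncurry_hom psi).
Proof.
move=> p q a m r v ha hr.
rewrite /uncurry_hom psi_hom.2 hom_hatmod_mode (hom_modeE _ _ ha hr).
by rewrite ksign_scaleK delta0_scale addrC subrK.
Qed.
End Uncurry.

Section Curry.
Variables (Q : hm_sp R -> hat_sp M -> hat_sp N).
Hypotheses (Q_bil : even_bilinear sR (hat_str M) (hat_str N) Q)
  (Q_eqv : mode_equivariant Q).

Lemma bilinear_linear_l v : linear (Q^~ v).
Proof. by case: Q_bil => Q_linl _ _ c r r'; apply: Q_linl. Qed.

Definition curry_hom v : hat_sp HomRN := LinMap (bilinear_linear_l v).

Lemma curry_hom_linear : linear curry_hom.
Proof. by case: Q_bil => _ Q_linr _ c v v'; apply: linmapP => r /=; apply: Q_linr. Qed.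

Lemma curry_hom_hathom : is_hathom curry_hom.
Proof.
split; first split.
- exact: curry_hom_linear.
- by case: Q_bil => _ _ Q_par p v hv q r hr /=; rewrite addbC; apply: Q_par.
move=> + m v; apply: (eq_linear_homog (s := sH)) => [c a a' | c a a' | p a ha].
- by rewrite hat_linl curry_hom_linear.
- exact: hom_mode_linl.
rewrite hom_hatmod_mode; apply: eq_hom_homog => q r hr.
rewrite (hom_modeE _ _ ha hr) /= (Q_eqv m v ha hr).
by rewrite delta0_scale addrC addKr ksign_scaleK.
Qed.
End Curry.
End Currying.

Section IntertwinerMap.
Variables (H : heisData) (R S T : hmod H) (IT : induced T).
Variable f : hm_sp R -> hm_sp S -> hm_sp T.
Hypothesis f_int : intertwiner f.
Local Notation HomRT := (hom_hatmod R (ind_mod IT)).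

Lemma intertwiner_incl_linear s : linear (fun r => ind_incl IT (f r s)).
Proof.
have [[incl_lin _] _ _] := ind_incl_bhom IT.
by case: f_int => -[f_linl _ _] _ c r r'; rewrite f_linl incl_lin.
Qed.

Definition intertwiner_map s : hat_sp HomRT := LinMap (intertwiner_incl_linear s).

Lemma intertwiner_map_bhom : is_bhom intertwiner_map.
Proof.
have [[incl_lin incl_par] incl_act incl_pos] := ind_incl_bhom IT.
have [[f_linl f_linr f_par] f_act] := f_int.
split; first split.
- by move=> c s s'; apply: linmapP => r /=; rewrite f_linr incl_lin.
- by move=> p s hs q r hr /=; apply: incl_par; rewrite addbC; apply: f_par.
- move=> + s; apply: (eq_linear_homog (s := hstr H)) => [c a a' | c a a' | p a ha].
  + by apply: linmapP => r /=; rewrite hm_act_linl f_linr incl_lin.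
  + exact: hom_mode_linl.
  apply: eq_hom_homog => q r hr; rewrite hom_hatmod_mode (hom_modeE _ _ ha hr) /=.
  rewrite -incl_act -(f_act _ _ _ _ _ ha hr) delta0_scale /= (linD incl_lin) addrC addKr.
  by rewrite (linZ incl_lin) ksign_scaleK.
- move=> + m s m_gt0; apply: (eq_linear_homog (s := hstr H)) => [c a a' | c a a' | p a ha].
  + exact: hat_linl.
  + by rewrite scaler0 addr0.
  apply: eq_hom_homog => q r hr; rewrite hom_hatmod_mode (hom_modeE _ _ ha hr) /=.
  by rewrite incl_pos // delta0_scale (negbTE (lt0r_neq0 m_gt0)) subr0 scaler0.
Qed.
End IntertwinerMap.

Unset Implicit Arguments.
Set Strict Implicit.
Theorem lemma3p5 (H : heisData) (R S T : hmod H)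
  (IS : induced S) (IT : induced T)
  (f : hm_sp R -> hm_sp S -> hm_sp T) :
  intertwiner f ->
  let P (Q : hm_sp R -> hat_sp (ind_mod IS) -> hat_sp (ind_mod IT)) :=
    [/\ even_bilinear (hm_str R) (hat_str (ind_mod IS)) (hat_str (ind_mod IT)) Q,
        forall r s, Q r (ind_incl IS s) = ind_incl IT (f r s)
      & forall p q a (m : int) r v, spar (hstr H) p a -> spar (hm_str R) q r ->
          hat_mode a m (Q r v)
          = (if m == 0 then Q (hm_act a r) v else 0)
            + ksign p q *: Q r (hat_mode a m v)] in
  exists Q, P Q /\ forall Q', P Q' -> forall r v, Q' r v = Q r v.
Proof.
move=> f_int P.
have [psi [psi_hom psi_incl psi_uniq]] := ind_univ IS (intertwiner_map_bhom IT f_int).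
exists (uncurry_hom psi); split.
  split; [exact: uncurry_hom_bilinear | | exact: uncurry_hom_equivariant].
  by move=> r s; rewrite /uncurry_hom psi_incl.
move=> Q [Q_bil Q_incl Q_eqv] r v.
have curry_incl s : curry_hom Q_bil (ind_incl IS s) = intertwiner_map IT f_int s.
  by apply: linmapP => r'; apply: Q_incl.
by rewrite /uncurry_hom -(psi_uniq _ (curry_hom_hathom Q_bil Q_eqv) curry_incl).
Qed.
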